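(* Assume $N\ge1$ relays at (fixed) source–relay distances $d_1,\dots,d_N\in[0,R_{\mathcal D}]$, $\alpha=2$, and the far-destination approximation (every relay–destination distance equals $d$). For a relay at source distance $r$ define its outage probability (averaged over fading) $$O_r(P)=\mathcal{P}\big(x_0+\eta y(x-\epsilon)<\epsilon,\ x>\epsilon\big)+\mathcal{P}\big(x_0<\epsilon,\ x<\epsilon\big),\quad x=\frac{|h|^2}{1+r^2},\ y=\frac{|g|^2}{1+d^2}.$$ Then for all sufficiently large $P$, selecting the relay closest to the source minimizes the outage probability: $O_{\min_j d_j}(P)\le O_{d_i}(P)$ for every $i\in\{1,\dots,N\}$.
   Context: $x_0=|h_d|^2/(1+d^2)$, where $d>0$ is the source–destination distance; $h_d,h,g$ are independent $\mathcal{CN}(0,1)$ fading coefficients. $\tau=2^{2R}-1$ for target rate $R>0$, $\epsilon=\tau/P$ with transmit power $P$, energy harvesting efficiency $\eta\in(0,1]$. A relay decodes iff $x>\epsilon$ and forwards with harvested power $\eta(Px-\tau)$; outage when the combined destination SNR $P(x_0+\eta y(x-\epsilon))$ is below $\tau$ (if the relay cannot decode, outage iff $x_0<\epsilon$). *)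

From Stdlib Require Import Reals Lra Classical ClassicalEpsilon.
Open Scope R_scope.

Definition improper_int_to (f : R -> R) (a l : R) : Prop :=
  (forall b, a <= b -> exists pr : Riemann_integrable f a b, True) /\
  (forall e, 0 < e -> exists M, forall b (pr : Riemann_integrable f a b),
      M <= b -> Rabs (RiemannInt pr - l) < e).

(* The value of the improper integral \int_0^{+oo} f (0 if it does not exist;
   the limit is unique when it exists). *)
Definition Int0inf (f : R -> R) : R :=
  match excluded_middle_informative (exists l, improper_int_to f 0 l) with
  | left H => proj1_sig (constructive_indefinite_description _ H)
  | right _ => 0
  end.

(* |h|^2 for h ~ CN(0,1) is Exp(1), with density exp(-t) on [0,+oo).
   Expectation of a function of three independent such variables
   (s = |h_d|^2, t = |h|^2, u = |g|^2). *)
Definition Exp3 (F : R -> R -> R -> R) : R :=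
  Int0inf (fun s => Int0inf (fun t => Int0inf (fun u =>
    F s t u * exp (- s) * exp (- t) * exp (- u)))).

Definition ind_lt (a b : R) : R := if Rlt_dec a b then 1 else 0.

Definition tau (Rt : R) : R := Rpower 2 (2 * Rt) - 1.
Definition eps (Rt P : R) : R := tau Rt / P.

Definition outage (d eta Rt P r : R) : R :=
  let e := eps Rt P in
  Exp3 (fun s t u =>
    let x0 := s / (1 + d ^ 2) in
    let x := t / (1 + r ^ 2) in
    let y := u / (1 + d ^ 2) in
    ind_lt (x0 + eta * y * (x - e)) e * ind_lt e x)
  + Exp3 (fun s t u =>
    let x0 := s / (1 + d ^ 2) in
    let x := t / (1 + r ^ 2) in
    ind_lt x0 e * ind_lt x e).

From Stdlib Require Import Reals Lra Psatz Classical ClassicalEpsilon.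
From Coquelicot Require Import Coquelicot.
Open Scope R_scope.

(* For fixed fading gains, the outage event depends on the relay distance r
   only through x = |h|^2/(1+r^2), and its indicator is nonincreasing in x
   except at the single point x = epsilon: below epsilon the relay cannot
   decode and only the direct link counts, above it the relay adds
   eta y (x - epsilon) >= 0 to the destination SNR.  A relay farther from the
   source has pointwise smaller x, hence a larger outage indicator, and
   integrating against the exponential fading densities preserves the
   inequality, for every P.  Most of the work is to show that the iterated
   improper Riemann integrals of these monotone indicators exist. *)

Lemma ex_RInt_uniform_limit f a b : a <= b ->
  (forall eps, 0 < eps -> exists g, ex_RInt g a b /\
     forall x, a <= x <= b -> Rabs (f x - g x) <= eps) ->
  ex_RInt f a b.
Proof.
  intros Hab Happrox. apply ex_RInt_Reals_1. intros eps.
  assert (Heps := cond_pos eps).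
  set (dl := eps / (2 * (b - a + 1))).
  assert (Hdl : 0 < dl) by (unfold dl; apply Rdiv_lt_0_compat; lra).
  assert (Edl : dl * (2 * (b - a + 1)) = eps) by (unfold dl; field; lra).
  destruct (constructive_indefinite_description _ (Happrox dl Hdl)) as [g [Hg Hfg]].
  assert (Hhalf : 0 < eps / 2) by lra.
  destruct (ex_RInt_Reals_0 _ _ _ Hg (mkposreal _ Hhalf)) as [phi [psi [Hphi Hpsi]]].
  (* the envelope of [g] widened by the constant [dl] controls [f - phi] *)
  exists phi, (mkStepFun (StepFun_P28 1 psi (mkStepFun (StepFun_P4 a b dl)))).
  split.
  - intros t Ht. simpl. unfold fct_cte.
    rewrite Rmin_left, Rmax_right in Ht by lra.
    assert (Hgphi : Rabs (g t - phi t) <= psi t)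
      by (apply Hphi; rewrite Rmin_left, Rmax_right; lra).
    specialize (Hfg t Ht).
    replace (f t - phi t) with ((f t - g t) + (g t - phi t)) by ring.
    eapply Rle_trans; [apply Rabs_triang|]. lra.
  - rewrite StepFun_P30, StepFun_P18. simpl in Hpsi.
    eapply Rle_lt_trans; [apply Rabs_triang|].
    rewrite (Rabs_right (1 * (dl * (b - a)))) by nra. nra.
Qed.

Definition nonincreasing_on (f : R -> R) (a b : R) : Prop :=
  forall x z, a <= x -> x < z -> z <= b -> f z <= f x.

Lemma ex_RInt_superlevel_indicator f a b y : a <= b -> nonincreasing_on f a b ->
  ex_RInt (fun x => ind_lt y (f x)) a b.
Proof.
  intros Hab Hf.
  set (E := fun x => x = a \/ (a <= x <= b /\ y < f x)).
  assert (HEb : bound E) by (exists b; intros x [->|[[_ Hx] _]]; lra).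
  destruct (completeness E HEb (ex_intro _ a (or_introl eq_refl))) as [z [Hub Hlub]].
  assert (Haz : a <= z) by (apply Hub; left; reflexivity).
  assert (Hzb : z <= b) by (apply Hlub; intros x [->|[[_ Hx] _]]; lra).
  apply ex_RInt_Chasles with z.
  - apply (ex_RInt_ext (fun _ => 1)); [|apply ex_RInt_const].
    rewrite Rmin_left, Rmax_right by lra. intros x Hx.
    assert (Hx' : exists x', E x' /\ x < x').
    { apply NNPP. intros Hno. assert (z <= x); [|lra].
      apply Hlub. intros x' Hx'. apply Rnot_lt_le. intros Hlt. apply Hno. eauto. }
    destruct Hx' as [x' [[->|[Hx'ab Hyx']] Hxx']]; [lra|].
    unfold ind_lt. destruct (Rlt_dec y (f x)) as [|Hn]; [reflexivity|].
    exfalso. apply Hn. eapply Rlt_le_trans; [exact Hyx'|]. apply Hf; lra.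
  - apply (ex_RInt_ext (fun _ => 0)); [|apply ex_RInt_const].
    rewrite Rmin_left, Rmax_right by lra. intros x Hx.
    unfold ind_lt. destruct (Rlt_dec y (f x)) as [Hy|]; [|reflexivity].
    assert (x <= z) by (apply Hub; right; split; [lra|exact Hy]). lra.
Qed.

Fixpoint staircase (f : R -> R) (c d : R) (n : nat) (x : R) : R :=
  match n with
  | O => 0
  | S m => staircase f c d m x + d * ind_lt (c + INR (S m) * d) (f x)
  end.

Lemma ex_RInt_staircase f c d n a b : a <= b -> nonincreasing_on f a b ->
  ex_RInt (staircase f c d n) a b.
Proof.
  intros Hab Hf. induction n as [|m IH]; simpl.
  - apply ex_RInt_const.
  - apply (ex_RInt_plus (V := R_CompleteNormedModule)); [exact IH|].
    apply (ex_RInt_scal (V := R_CompleteNormedModule)).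
    now apply ex_RInt_superlevel_indicator.
Qed.

Lemma staircase_spec f c d x : 0 < d -> c <= f x -> forall n,
  staircase f c d n x <= f x - c /\
  (c + INR n * d < f x -> staircase f c d n x = INR n * d) /\
  (f x <= c + INR n * d -> f x - c - staircase f c d n x <= d).
Proof.
  intros Hd Hc n. induction n as [|m [IHle [IHeq IHgap]]].
  - simpl. lra.
  - cbn [staircase]. rewrite S_INR. unfold ind_lt.
    replace ((INR m + 1) * d) with (INR m * d + d) by ring.
    destruct (Rlt_dec (c + (INR m * d + d)) (f x)) as [Hlt|Hge].
    + assert (staircase f c d m x = INR m * d) by (apply IHeq; lra).
      repeat split; intros; lra.
    + destruct (Rlt_dec (c + INR m * d) (f x)).
      * assert (staircase f c d m x = INR m * d) by (apply IHeq; lra).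
        repeat split; intros; lra.
      * assert (f x - c - staircase f c d m x <= d) by (apply IHgap; lra).
        repeat split; intros; lra.
Qed.

Lemma ex_RInt_nonincreasing f a b : a <= b -> nonincreasing_on f a b -> ex_RInt f a b.
Proof.
  intros Hab Hf. apply ex_RInt_uniform_limit; [exact Hab|]. intros eps Heps.
  destruct (INR_unbounded ((f a - f b) / eps)) as [n Hn].
  assert (Hneps : f a - f b < INR n * eps).
  { apply (Rmult_lt_compat_r eps) in Hn; [|exact Heps].
    unfold Rdiv in Hn. rewrite Rmult_assoc, Rinv_l, Rmult_1_r in Hn by lra. lra. }
  exists (fun x => f b + staircase f (f b) eps n x). split.
  - apply (ex_RInt_plus (V := R_CompleteNormedModule)); [apply ex_RInt_const|].
    now apply ex_RInt_staircase.
  - intros x Hx.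
    assert (Hfb : f b <= f x) by (destruct (Req_dec x b) as [->|]; [lra|apply Hf; lra]).
    assert (Hfa : f x <= f a) by (destruct (Req_dec a x) as [->|]; [lra|apply Hf; lra]).
    destruct (staircase_spec f (f b) eps x Heps Hfb n) as [Hle [_ Hgap]].
    specialize (Hgap ltac:(lra)).
    rewrite Rabs_right by lra. lra.
Qed.

Lemma ex_RInt_nonincreasing_except f a b p B : a <= b ->
  (forall x z, a <= x -> x < z -> z <= b -> x <> p -> f z <= f x) ->
  (forall x, a <= x <= b -> f x <= B) ->
  ex_RInt f a b.
Proof.
  intros Hab Hf HB.
  set (q := Rmax a (Rmin p b)).
  assert (Hq : a <= q <= b /\ (a <= p -> q <= p) /\ (p < b -> p <= q)).
  { unfold q, Rmax, Rmin. repeat destruct Rle_dec; lra. }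
  apply ex_RInt_Chasles with q.
  - apply ex_RInt_nonincreasing; [lra|].
    intros x z Hx Hxz Hz. apply Hf; lra.
  - (* raising the value at q to B makes f nonincreasing on [q, b] *)
    set (g := fun x => if Req_EM_T x q then B else f x).
    apply (ex_RInt_ext g).
    { rewrite Rmin_left, Rmax_right by lra. intros x Hx.
      unfold g. destruct (Req_EM_T x q); [lra|reflexivity]. }
    apply ex_RInt_nonincreasing; [lra|].
    intros x z Hx Hxz Hz. unfold g.
    destruct (Req_EM_T z q); [lra|].
    destruct (Req_EM_T x q); [apply HB; lra|].
    apply Hf; lra.
Qed.

Lemma RInt_le_except (f g : R -> R) a b p : a <= b -> ex_RInt f a b -> ex_RInt g a b ->
  (forall x, a < x < b -> x <> p -> f x <= g x) -> RInt f a b <= RInt g a b.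
Proof.
  intros Hab Hf Hg Hfg.
  destruct (classic (a < p < b)) as [Hp|Hp].
  - assert (Hsplit : forall h : R -> R, ex_RInt h a b -> ex_RInt h a p /\ ex_RInt h p b).
    { intros h Hh. split.
      - apply (ex_RInt_Chasles_1 (V := R_CompleteNormedModule) _ _ _ b); [lra|exact Hh].
      - apply (ex_RInt_Chasles_2 (V := R_CompleteNormedModule) _ a); [lra|exact Hh]. }
    destruct (Hsplit f Hf) as [Hf1 Hf2]. destruct (Hsplit g Hg) as [Hg1 Hg2].
    rewrite <- (RInt_Chasles f a p b), <- (RInt_Chasles g a p b) by assumption.
    apply Rplus_le_compat; apply RInt_le; auto; try lra;
      intros x Hx; apply Hfg; lra.
  - apply RInt_le; auto. intros x Hx. apply Hfg; lra.
Qed.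

Lemma improper_int_to_is_lim f l : improper_int_to f 0 l <->
  (forall b, 0 <= b -> ex_RInt f 0 b) /\ is_lim (fun b => RInt f 0 b) p_infty l.
Proof.
  split; intros [Hint Hlim]; split.
  - intros b Hb. destruct (Hint b Hb) as [pr _]. now apply ex_RInt_Reals_1.
  - apply is_lim_spec. intros eps.
    destruct (Hlim eps (cond_pos eps)) as [M HM].
    exists (Rmax M 0). intros b Hb.
    assert (HbM := Rle_lt_trans _ _ _ (Rmax_l M 0) Hb).
    assert (Hb0 := Rle_lt_trans _ _ _ (Rmax_r M 0) Hb).
    destruct (Hint b (Rlt_le _ _ Hb0)) as [pr _].
    rewrite (RInt_Reals f 0 b pr). apply HM. lra.
  - intros b Hb. exists (ex_RInt_Reals_0 _ _ _ (Hint b Hb)). exact I.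
  - intros eps Heps. apply is_lim_spec in Hlim.
    destruct (Hlim (mkposreal eps Heps)) as [M HM].
    exists (M + 1). intros b pr Hb.
    rewrite <- (RInt_Reals f 0 b pr). apply HM. lra.
Qed.

Lemma improper_int_to_unique f l1 l2 :
  improper_int_to f 0 l1 -> improper_int_to f 0 l2 -> l1 = l2.
Proof.
  intros [_ H1]%improper_int_to_is_lim [_ H2]%improper_int_to_is_lim.
  apply is_lim_unique in H1. apply is_lim_unique in H2.
  rewrite H1 in H2. now injection H2.
Qed.

Lemma Int0inf_improper f l : improper_int_to f 0 l -> Int0inf f = l.
Proof.
  intros Hl. unfold Int0inf.
  destruct (excluded_middle_informative _) as [Hex|Hnex].
  - destruct (constructive_indefinite_description _ Hex) as [l' Hl'].
    exact (improper_int_to_unique f l' l Hl' Hl).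
  - exfalso. apply Hnex. now exists l.
Qed.

Lemma improper_int_to_le (f g : R -> R) l1 l2 p :
  improper_int_to f 0 l1 -> improper_int_to g 0 l2 ->
  (forall v, 0 < v -> v <> p -> f v <= g v) -> l1 <= l2.
Proof.
  intros [Hf H1]%improper_int_to_is_lim [Hg H2]%improper_int_to_is_lim Hfg.
  apply (is_lim_le_loc (fun b => RInt f 0 b) (fun b => RInt g 0 b) p_infty l1 l2); [|exact H1|exact H2].
  exists 0. intros b Hb.
  apply (RInt_le_except _ _ _ _ p); [lra|apply Hf; lra|apply Hg; lra|].
  intros x Hx. apply Hfg; lra.
Qed.

Lemma improper_int_to_minus (f g h : R -> R) l1 l2 :
  improper_int_to f 0 l1 -> improper_int_to g 0 l2 ->
  (forall v, 0 <= v -> h v = f v - g v) ->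
  improper_int_to h 0 (l1 - l2).
Proof.
  intros [Hf H1]%improper_int_to_is_lim [Hg H2]%improper_int_to_is_lim Hh.
  assert (Hext : forall b, 0 <= b -> forall x, Rmin 0 b < x < Rmax 0 b ->
                   minus (f x) (g x) = h x).
  { intros b Hb x Hx. rewrite Rmin_left, Rmax_right in Hx by lra.
    symmetry. apply Hh. lra. }
  apply improper_int_to_is_lim. split.
  - intros b Hb. apply (ex_RInt_ext _ _ _ _ (Hext b Hb)).
    apply (ex_RInt_minus (V := R_NormedModule)); [apply Hf | apply Hg]; exact Hb.
  - apply (is_lim_ext_loc (fun b => RInt f 0 b - RInt g 0 b)).
    + exists 0. intros b Hb.
      rewrite <- (RInt_ext _ _ _ _ (Hext b (Rlt_le _ _ Hb))).
      symmetry. apply (RInt_minus (V := R_CompleteNormedModule)); [apply Hf | apply Hg]; lra.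
    + exact (is_lim_minus' _ _ _ l1 l2 H1 H2).
Qed.

Lemma is_RInt_scal_exp_opp M b :
  is_RInt (fun x => M * exp (- x)) 0 b (M - M * exp (- b)).
Proof.
  replace (M - M * exp (- b)) with (minus (- M * exp (- b)) (- M * exp (- 0)))
    by (unfold minus, plus, opp; simpl; rewrite Ropp_0, exp_0; ring).
  apply (is_RInt_derive (fun x => - M * exp (- x))).
  - intros x _. auto_derive; auto. ring.
  - intros x _. apply (ex_derive_continuous (fun x => M * exp (- x))). auto_derive; auto.
Qed.

Lemma is_lim_nondecreasing_bounded (g : R -> R) M :
  (forall x y, 0 <= x <= y -> g x <= g y) -> (forall x, 0 <= x -> g x <= M) ->
  exists l : R, is_lim g p_infty l /\ g 0 <= l <= M.
Proof.
  intros Hmono Hbnd.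
  set (E := fun y => exists b, 0 <= b /\ y = g b).
  assert (HE : exists y, E y) by (exists (g 0), 0; split; [lra|reflexivity]).
  assert (HEM : bound E) by (exists M; intros y [b [Hb ->]]; now apply Hbnd).
  destruct (completeness E HEM HE) as [l [Hub Hlub]].
  exists l. split; [|split].
  - apply is_lim_spec. intros eps. assert (Heps := cond_pos eps).
    destruct (classic (exists b, 0 <= b /\ l - eps < g b)) as [[b [Hb Hgb]]|Hno].
    + exists b. intros x Hx.
      assert (g x <= l) by (apply Hub; exists x; split; [lra|reflexivity]).
      assert (g b <= g x) by (apply Hmono; lra).
      apply Rabs_def1; lra.
    + exfalso. assert (l <= l - eps); [|lra].
      apply Hlub. intros y [b [Hb ->]]. apply Rnot_lt_le. intros Hlt. eauto.
  - apply Hub. exists 0. split; [lra|reflexivity].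
  - apply Hlub. intros y [b [Hb ->]]. now apply Hbnd.
Qed.

Lemma improper_int_to_dominated (f : R -> R) M :
  (forall v, 0 <= v -> 0 <= f v <= M * exp (- v)) ->
  (forall b, 0 <= b -> ex_RInt f 0 b) ->
  exists l, improper_int_to f 0 l /\ 0 <= l <= M.
Proof.
  intros Hdom Hint.
  assert (HM : 0 <= M).
  { destruct (Hdom 0 (Rle_refl 0)) as [H0 H1]. rewrite Ropp_0, exp_0 in H1. lra. }
  assert (Hmono : forall x y, 0 <= x <= y -> RInt f 0 x <= RInt f 0 y).
  { intros x y Hxy.
    assert (Hx : ex_RInt f 0 x) by (apply Hint; lra).
    assert (Hy : ex_RInt f x y)
      by (apply (ex_RInt_Chasles_2 (V := R_CompleteNormedModule) _ 0); [lra|apply Hint; lra]).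
    rewrite <- (RInt_Chasles f 0 x y Hx Hy).
    assert (0 <= RInt f x y) by (apply RInt_ge_0; [lra|exact Hy|intros; apply Hdom; lra]).
    simpl. unfold plus. simpl. lra. }
  assert (Hbnd : forall x, 0 <= x -> RInt f 0 x <= M).
  { intros x Hx.
    apply Rle_trans with (RInt (fun v => M * exp (- v)) 0 x).
    - apply RInt_le; [exact Hx|now apply Hint|eexists; apply is_RInt_scal_exp_opp|].
      intros v Hv. apply Hdom. lra.
    - rewrite (is_RInt_unique _ _ _ _ (is_RInt_scal_exp_opp M x)).
      assert (0 < exp (- x)) by apply exp_pos.
      nra. }
  destruct (is_lim_nondecreasing_bounded _ M Hmono Hbnd) as [l [Hlim Hl]].
  rewrite RInt_point in Hl.
  exists l. split; [|exact Hl].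
  apply improper_int_to_is_lim. split; assumption.
Qed.

Lemma exp_opp_le x y : x <= y -> exp (- y) <= exp (- x).
Proof.
  intros Hxy. destruct (Req_dec x y) as [->|]; [lra|].
  left. apply exp_increasing. lra.
Qed.

Lemma exp_weight_le a1 a2 s1 s2 t1 t2 u1 u2 :
  0 <= a2 <= a1 -> s1 <= s2 -> t1 <= t2 -> u1 <= u2 ->
  a2 * exp (- s2) * exp (- t2) * exp (- u2) <= a1 * exp (- s1) * exp (- t1) * exp (- u1).
Proof.
  intros Ha Hs Ht Hu.
  assert (Es := exp_opp_le _ _ Hs). assert (Et := exp_opp_le _ _ Ht).
  assert (Eu := exp_opp_le _ _ Hu).
  assert (exp (- s2) > 0) by apply exp_pos. assert (exp (- t2) > 0) by apply exp_pos.
  assert (exp (- u2) > 0) by apply exp_pos.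
  repeat apply Rmult_le_compat; try lra; repeat apply Rmult_le_pos; lra.
Qed.

Definition Exp3_inner (F : R -> R -> R -> R) (s t : R) : R :=
  Int0inf (fun u => F s t u * exp (- s) * exp (- t) * exp (- u)).

Definition Exp3_middle (F : R -> R -> R -> R) (s : R) : R :=
  Int0inf (Exp3_inner F s).

Record antitone_kernel (F : R -> R -> R -> R) (p : R) : Prop := {
  kernel_bounds : forall s t u, 0 <= F s t u <= 1;
  kernel_antitone_s : forall s1 s2 t u, s1 <= s2 -> F s2 t u <= F s1 t u;
  kernel_antitone_t : forall s t1 t2 u, t1 <= t2 -> t1 <> p -> 0 <= u ->
                        F s t2 u <= F s t1 u;
  kernel_antitone_u : forall s t u1 u2, u1 <= u2 -> F s t u2 <= F s t u1 }.

Section AntitoneKernel.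

Variables (F : R -> R -> R -> R) (p : R).
Hypothesis HF : antitone_kernel F p.

Lemma improper_Exp3_inner s t :
  improper_int_to (fun u => F s t u * exp (- s) * exp (- t) * exp (- u)) 0 (Exp3_inner F s t)
  /\ 0 <= Exp3_inner F s t <= exp (- s) * exp (- t).
Proof.
  destruct (improper_int_to_dominated
              (fun u => F s t u * exp (- s) * exp (- t) * exp (- u)) (exp (- s) * exp (- t)))
    as [l [Hl Hlb]].
  - intros v Hv. destruct (kernel_bounds _ _ HF s t v).
    assert (exp (- s) > 0) by apply exp_pos. assert (exp (- t) > 0) by apply exp_pos.
    assert (exp (- v) > 0) by apply exp_pos.
    split; [repeat apply Rmult_le_pos; lra|].
    rewrite <- (Rmult_1_l (exp (- s) * exp (- t) * exp (- v))). rewrite <- !Rmult_assoc.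
    repeat apply Rmult_le_compat_r; lra.
  - intros b Hb. apply ex_RInt_nonincreasing; [exact Hb|].
    intros x z Hx Hxz Hz. apply exp_weight_le; try lra.
    split; [apply (kernel_bounds _ _ HF)|apply (kernel_antitone_u _ _ HF); lra].
  - unfold Exp3_inner. rewrite (Int0inf_improper _ _ Hl). auto.
Qed.

Lemma Exp3_inner_antitone s1 s2 t1 t2 : s1 <= s2 -> t1 <= t2 ->
  (forall u, 0 <= u -> F s2 t2 u <= F s1 t1 u) ->
  Exp3_inner F s2 t2 <= Exp3_inner F s1 t1.
Proof.
  intros Hs Ht HF12.
  apply (improper_int_to_le _ _ _ _ 0 (proj1 (improper_Exp3_inner s2 t2))
           (proj1 (improper_Exp3_inner s1 t1))).
  intros u Hu _. apply exp_weight_le; try lra.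
  split; [apply (kernel_bounds _ _ HF)|apply HF12; lra].
Qed.

Lemma improper_Exp3_middle s :
  improper_int_to (Exp3_inner F s) 0 (Exp3_middle F s) /\ 0 <= Exp3_middle F s <= exp (- s).
Proof.
  assert (Hs := exp_pos (- s)).
  destruct (improper_int_to_dominated (Exp3_inner F s) (exp (- s))) as [l [Hl Hlb]].
  - intros v Hv. apply improper_Exp3_inner.
  - intros b Hb. apply (ex_RInt_nonincreasing_except _ 0 b p (exp (- s))); [exact Hb| |].
    + intros x z Hx Hxz Hz Hxp. apply Exp3_inner_antitone; try lra.
      intros u Hu. apply (kernel_antitone_t _ _ HF); lra.
    + intros x Hx. destruct (improper_Exp3_inner s x) as [_ [_ Hle]].
      assert (exp (- x) <= 1) by (rewrite <- exp_0, <- Ropp_0; apply exp_opp_le; lra).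
      nra.
  - unfold Exp3_middle. rewrite (Int0inf_improper _ _ Hl). auto.
Qed.

Lemma Exp3_middle_antitone s1 s2 : s1 <= s2 -> Exp3_middle F s2 <= Exp3_middle F s1.
Proof.
  intros Hs.
  apply (improper_int_to_le _ _ _ _ 0 (proj1 (improper_Exp3_middle s2))
           (proj1 (improper_Exp3_middle s1))).
  intros t Ht _. apply Exp3_inner_antitone; try lra.
  intros u Hu. now apply (kernel_antitone_s _ _ HF).
Qed.

Lemma improper_Exp3 : improper_int_to (Exp3_middle F) 0 (Exp3 F).
Proof.
  destruct (improper_int_to_dominated (Exp3_middle F) 1) as [l [Hl _]].
  - intros v Hv. rewrite Rmult_1_l. apply improper_Exp3_middle.
  - intros b Hb. apply ex_RInt_nonincreasing; [exact Hb|].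
    intros x z Hx Hxz Hz. apply Exp3_middle_antitone. lra.
  - change (Exp3 F) with (Int0inf (Exp3_middle F)). now rewrite (Int0inf_improper _ _ Hl).
Qed.

End AntitoneKernel.

Lemma Exp3_le F G p q : antitone_kernel F p -> antitone_kernel G q ->
  (forall s t u, 0 < t -> t <> q -> 0 <= u -> F s t u <= G s t u) ->
  Exp3 F <= Exp3 G.
Proof.
  intros HF HG HFG.
  apply (improper_int_to_le _ _ _ _ 0 (improper_Exp3 F p HF) (improper_Exp3 G q HG)).
  intros s _ _.
  apply (improper_int_to_le _ _ _ _ q (proj1 (improper_Exp3_middle F p HF s))
           (proj1 (improper_Exp3_middle G q HG s))).
  intros t Ht Htq.
  apply (improper_int_to_le _ _ _ _ 0 (proj1 (improper_Exp3_inner F p HF s t))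
           (proj1 (improper_Exp3_inner G q HG s t))).
  intros u Hu _. apply exp_weight_le; try lra.
  split; [apply (kernel_bounds _ _ HF)|apply HFG; lra].
Qed.

Lemma Exp3_sub F G H p q : antitone_kernel G p -> antitone_kernel H q ->
  (forall s t u, F s t u = G s t u - H s t u) -> Exp3 F = Exp3 G - Exp3 H.
Proof.
  intros HG HH HF.
  assert (Hinner : forall s t, Exp3_inner F s t = Exp3_inner G s t - Exp3_inner H s t).
  { intros s t. apply Int0inf_improper.
    apply (improper_int_to_minus _ _ _ _ _ (proj1 (improper_Exp3_inner G p HG s t))
             (proj1 (improper_Exp3_inner H q HH s t))).
    intros u _. rewrite HF. ring. }
  assert (Hmiddle : forall s, Exp3_middle F s = Exp3_middle G s - Exp3_middle H s).
  { intros s. apply Int0inf_improper.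
    apply (improper_int_to_minus _ _ _ _ _ (proj1 (improper_Exp3_middle G p HG s))
             (proj1 (improper_Exp3_middle H q HH s))).
    intros t _. apply Hinner. }
  change (Exp3 F) with (Int0inf (Exp3_middle F)). apply Int0inf_improper.
  apply (improper_int_to_minus _ _ _ _ _ (improper_Exp3 G p HG) (improper_Exp3 H q HH)).
  intros s _. apply Hmiddle.
Qed.

Definition outage_indicator (a eta e s x u : R) : R :=
  ind_lt (s / a + eta * (u / a) * (x - e)) e * ind_lt e x + ind_lt (s / a) e * ind_lt x e.

Lemma outage_indicator_bounds a eta e s x u : 0 <= outage_indicator a eta e s x u <= 1.
Proof. unfold outage_indicator, ind_lt. repeat destruct Rlt_dec; lra. Qed.

Lemma div_pos_le (x y c : R) : 0 < c -> x <= y -> x / c <= y / c.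
Proof. intros Hc Hxy. apply Rmult_le_compat_r; [left; apply Rinv_0_lt_compat|]; lra. Qed.

(* At [x = e] both indicators vanish, hence the exception [x1 <> e]. *)
Lemma outage_indicator_antitone_x a eta e s x1 x2 u :
  0 < a -> 0 <= eta -> 0 <= u -> x1 <= x2 -> x1 <> e ->
  outage_indicator a eta e s x2 u <= outage_indicator a eta e s x1 u.
Proof.
  intros Ha Heta Hu Hx Hx1.
  assert (Hk : 0 <= eta * (u / a)) by (apply Rmult_le_pos; [lra|apply Rdiv_le_0_compat; lra]).
  unfold outage_indicator, ind_lt. set (k := eta * (u / a)) in *.
  repeat destruct Rlt_dec; nra.
Qed.

Lemma outage_indicator_antitone_s a eta e s1 s2 x u : 0 < a -> s1 <= s2 ->
  outage_indicator a eta e s2 x u <= outage_indicator a eta e s1 x u.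
Proof.
  intros Ha Hs. assert (s1 / a <= s2 / a) by (apply div_pos_le; lra).
  unfold outage_indicator, ind_lt. repeat destruct Rlt_dec; lra.
Qed.

Lemma outage_indicator_antitone_u a eta e s x u1 u2 : 0 < a -> 0 <= eta -> u1 <= u2 ->
  outage_indicator a eta e s x u2 <= outage_indicator a eta e s x u1.
Proof.
  intros Ha Heta Hu. unfold outage_indicator, ind_lt.
  destruct (Rlt_dec e x) as [Hx|Hx]; [|repeat destruct Rlt_dec; lra].
  assert (eta * (u1 / a) * (x - e) <= eta * (u2 / a) * (x - e)).
  { apply Rmult_le_compat_r; [lra|]. apply Rmult_le_compat_l; [lra|]. now apply div_pos_le. }
  repeat destruct Rlt_dec; lra.
Qed.

Definition relay_kernel (a eta e c : R) : R -> R -> R -> R :=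
  fun s t u => outage_indicator a eta e s (t / c) u.

Definition direct_kernel (a e c : R) : R -> R -> R -> R :=
  fun s t _ => ind_lt (s / a) e * ind_lt (t / c) e.

Lemma relay_kernel_antitone a eta e c : 0 < a -> 0 <= eta -> 0 < c ->
  antitone_kernel (relay_kernel a eta e c) (c * e).
Proof.
  intros Ha Heta Hc. constructor; unfold relay_kernel.
  - intros. apply outage_indicator_bounds.
  - intros. now apply outage_indicator_antitone_s.
  - intros s t1 t2 u Ht Htp Hu. apply outage_indicator_antitone_x; auto.
    + now apply div_pos_le.
    + intros He. apply Htp. rewrite <- He. field. lra.
  - intros. now apply outage_indicator_antitone_u.
Qed.

Lemma direct_kernel_antitone a e c : 0 < a -> 0 < c -> antitone_kernel (direct_kernel a e c) 0.
Proof.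
  intros Ha Hc. constructor; unfold direct_kernel.
  - intros. unfold ind_lt. repeat destruct Rlt_dec; lra.
  - intros s1 s2 t u Hs. assert (s1 / a <= s2 / a) by now apply div_pos_le.
    unfold ind_lt. repeat destruct Rlt_dec; lra.
  - intros s t1 t2 u Ht _ _. assert (t1 / c <= t2 / c) by now apply div_pos_le.
    unfold ind_lt. repeat destruct Rlt_dec; lra.
  - intros. lra.
Qed.

Lemma one_plus_sqr_pos r : 0 < 1 + r ^ 2.
Proof. assert (H := pow2_ge_0 r). lra. Qed.

(* The first summand of [outage] is not monotone in [t] on its own, so it is
   written as the difference of two antitone kernels. *)
Lemma outage_Exp3 d eta Rt P r : 0 <= eta ->
  outage d eta Rt P r = Exp3 (relay_kernel (1 + d ^ 2) eta (eps Rt P) (1 + r ^ 2)).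
Proof.
  intros Heta.
  assert (Ha := one_plus_sqr_pos d). assert (Hc := one_plus_sqr_pos r).
  unfold outage. cbv zeta.
  rewrite (Exp3_sub _ _ _ _ _ (relay_kernel_antitone _ eta (eps Rt P) _ Ha Heta Hc)
             (direct_kernel_antitone _ (eps Rt P) _ Ha Hc)).
  - change (Exp3 (fun s t u => ind_lt (s / (1 + d ^ 2)) (eps Rt P) * ind_lt (t / (1 + r ^ 2)) (eps Rt P)))
      with (Exp3 (direct_kernel (1 + d ^ 2) (eps Rt P) (1 + r ^ 2))).
    ring.
  - intros s t u. unfold relay_kernel, direct_kernel, outage_indicator. ring.
Qed.

Lemma outage_le_of_dist_le d eta Rt P r1 r2 : 0 <= eta -> 0 <= r1 <= r2 ->
  outage d eta Rt P r1 <= outage d eta Rt P r2.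
Proof.
  intros Heta Hr.
  assert (Ha := one_plus_sqr_pos d).
  assert (Hc1 := one_plus_sqr_pos r1). assert (Hc2 := one_plus_sqr_pos r2).
  assert (Hc12 : 1 + r1 ^ 2 <= 1 + r2 ^ 2) by (apply Rplus_le_compat_l, pow_incr; lra).
  rewrite !outage_Exp3 by exact Heta.
  apply (Exp3_le _ _ _ _ (relay_kernel_antitone _ eta (eps Rt P) _ Ha Heta Hc1)
           (relay_kernel_antitone _ eta (eps Rt P) _ Ha Heta Hc2)).
  intros s t u Ht Hte Hu. unfold relay_kernel.
  apply outage_indicator_antitone_x; auto.
  - unfold Rdiv. apply Rmult_le_compat_l; [lra|]. apply Rinv_le_contravar; lra.
  - intros He. apply Hte. rewrite <- He. field. lra.
Qed.

Theorem proposition1 (N : nat) (ds : nat -> R) (RD d eta Rt : R) :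
  (1 <= N)%nat ->
  0 < d -> 0 < eta <= 1 -> 0 < Rt ->
  (forall i, (i < N)%nat -> 0 <= ds i <= RD) ->
  exists P0 : R, forall P : R, P0 < P ->
    forall j, (j < N)%nat -> (forall k, (k < N)%nat -> ds j <= ds k) ->
    forall i, (i < N)%nat ->
      outage d eta Rt P (ds j) <= outage d eta Rt P (ds i).
Proof.
  intros _ _ Heta _ Hds.
  (* the comparison holds for every [P] *)
  exists 0. intros P _ j Hj Hmin i Hi.
  apply outage_le_of_dist_le; [lra|].
  split; [apply (Hds j Hj)|apply (Hmin i Hi)].
Qed.
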